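(* Let $n\ge1$ and $1\le m\le n$ be integers, $x>0$, and $\Delta\equiv\lfloor\frac{n+1}{m+1}\rfloor$. Let $\Delta_1,\dots,\Delta_{m+1}\in\{\Delta,\Delta+1\}$ be integers with $\sum_{k=1}^{m+1}\Delta_k=n+1$, and let $\boldsymbol v^*\in\mathbb{R}^n$ have $i$-th coordinate $x$ if $i\in\{\sum_{k=1}^{j}\Delta_k:1\le j\le m\}$ and $0$ otherwise. Then $\boldsymbol v^*$ minimizes $f$ over $\Lambda(mx)$, and \[ \min_{\boldsymbol v\in\Lambda(mx)} f(\boldsymbol v)=f(\boldsymbol v^* )=\Delta(n+1)x-\tfrac12(m+1)x\,\Delta(\Delta+1). \] Moreover, for every $\boldsymbol v\in\Lambda(mx)$ and every $1\le j\le n$, $\sum_{l=1}^{n+1-j}\bigl(x-\sum_{i=l}^{l+j-1}v_i\bigr)^+\ge\sum_{l=1}^{n+1-j}\bigl(x-\sum_{i=l}^{l+j-1}v^*_i\bigr)^+$.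
   Context: For $w>0$, $\Lambda(w)$ is the set of vectors in $\mathbb{R}^n$ with nonnegative coordinates summing to $w$. For $\boldsymbol v=(v_1,\dots,v_n)$, $f(\boldsymbol v)\equiv\sum_{1\le l\le k\le n}\bigl(x-\sum_{i=l}^k v_i\bigr)^+$, where $a^+=\max\{a,0\}$. *)

(* Vectors in R^n are functions 'I_n -> R; indices are
   0-based here (coordinate i of the paper is index i-1). *)
From mathcomp Require Import all_boot all_order all_algebra.
Set Implicit Arguments. Unset Strict Implicit. Unset Printing Implicit Defensive.
Import Order.TTheory GRing.Theory Num.Theory.
Local Open Scope ring_scope.

Definition pospart (R : realFieldType) (a : R) : R := Num.max a 0.

Definition Lambda (R : realFieldType) (n : nat) (w : R) (v : 'I_n -> R) : Prop :=
  (forall i, 0 <= v i) /\ \sum_(i < n) v i = w.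

Definition segsum (R : realFieldType) (n : nat) (v : 'I_n -> R) (l k : nat) : R :=
  \sum_(i < n | (l <= i)%N && (i <= k)%N) v i.

Definition fobj (R : realFieldType) (n : nat) (x : R) (v : 'I_n -> R) : R :=
  \sum_(l < n) \sum_(k < n | (l <= k)%N) pospart (x - segsum v l k).

(* sum_{l=1}^{n+1-j} (x - sum_{i=l}^{l+j-1} v_i)^+ , 0-based l from 0 to n-j *)
Definition window_obj (R : realFieldType) (n : nat) (x : R) (v : 'I_n -> R) (j : nat) : R :=
  \sum_(l < n | (l + j <= n)%N) pospart (x - segsum v l (l + j - 1)).

(* v*: coordinate i (1-based) equals x iff i = sum_{k=1}^{j} Delta_k for some
   1 <= j <= m; d : 'I_(m+1) -> nat lists Delta_1..Delta_{m+1}. *)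
Definition vstar (R : realFieldType) (n m : nat) (x : R) (d : 'I_m.+1 -> nat) : 'I_n -> R :=
  fun i => if [exists j : 'I_m.+1, (0 < j)%N && (i.+1 == \sum_(k < m.+1 | (k < j)%N) d k)%N]
           then x else 0.

From mathcomp Require Import all_boot all_order all_algebra.
From mathcomp Require Import zify ring.
Set Implicit Arguments. Unset Strict Implicit. Unset Printing Implicit Defensive.
Import Order.TTheory GRing.Theory Num.Theory.
Local Open Scope ring_scope.

(* Grouping the terms of f by the length j of the window
   [l, l + j - 1] writes f(v) as the sum over j = 1..n of the window
   objectives W_j(v) = sum_l (x - sum of v over the l-th window of length j)^+
   (fobj_windows).  For v in Lambda(w), dropping the positive part and
   noting that each coordinate lies in at most j windows of length j gives
   the universal lower bound W_j(v) >= (n+1-j) x - j w (window_obj_lb);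
   trivially W_j(v) >= 0 as well.
   The marked coordinates of v* are the partial sums of the block lengths
   Delta_k, so two of them are at least Delta apart, none lies within
   Delta of either end, and every window of length Delta + 1 contains one.
   Hence for j <= Delta every window of length j carries mass at most x and
   every coordinate carrying mass lies in exactly j windows, so W_j(vstar)
   attains the lower bound; for j > Delta every window has mass >= x, so
   W_j(vstar) = 0.  This proves the window-wise statement, hence optimality of
   v*, and summing the lower bounds over j <= Delta gives the closed form. *)

(* Vectors are padded with zeros to sequences indexed by nat, so that
   windows can be described by plain index arithmetic. *)
Definition padded (R : realFieldType) (n : nat) (v : 'I_n -> R) (i : nat) : R :=
  oapp v 0 (insub i).

Lemma padded_ord (R : realFieldType) n (v : 'I_n -> R) (i : 'I_n) : padded v i = v i.
Proof. by rewrite /padded valK. Qed.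

Lemma padded_ge0 (R : realFieldType) n (v : 'I_n -> R) :
  (forall i, 0 <= v i) -> forall i, 0 <= padded v i.
Proof. by move=> v0 i; rewrite /padded; case: insub. Qed.

Lemma sum_padded (R : realFieldType) n (v : 'I_n -> R) :
  \sum_(i < n) v i = \sum_(0 <= i < n) padded v i.
Proof. by rewrite big_mkord; apply: eq_bigr => i _; rewrite padded_ord. Qed.

Lemma sum_nat_shift (R : realFieldType) (F : nat -> R) a j :
  \sum_(a <= i < a + j) F i = \sum_(t < j) F (a + t)%N.
Proof.
rewrite -{1}[a]add0n big_addn addKn big_mkord.
by apply: eq_bigr => t _; rewrite addnC.
Qed.

Lemma sum_nat_subinterval (R : realFieldType) (F : nat -> R) a b c e :
  (forall i, 0 <= F i) -> (a <= b)%N -> (b <= c)%N -> (c <= e)%N ->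
  \sum_(b <= i < c) F i <= \sum_(a <= i < e) F i.
Proof.
move=> F0 ab bc ce.
rewrite (@big_cat_nat _ _ _ b a e) //=; last exact: leq_trans ce.
rewrite (@big_cat_nat _ _ _ c b e) //= addrC -addrA lerDl.
by rewrite addr_ge0 //; apply: sumr_ge0.
Qed.

Lemma sum_nat_support (R : realFieldType) (F : nat -> R) a b c e :
  (forall i, (i < b)%N || (c <= i)%N -> F i = 0) ->
  (a <= b)%N -> (b <= c)%N -> (c <= e)%N ->
  \sum_(b <= i < c) F i = \sum_(a <= i < e) F i.
Proof.
move=> F0 ab bc ce.
have left0 : \sum_(a <= i < b) F i = 0.
  by rewrite big_nat_cond big1 // => i /andP[/andP[_ ib] _]; rewrite F0 ?ib.
have right0 : \sum_(c <= i < e) F i = 0.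
  by rewrite big_nat_cond big1 // => i /andP[/andP[ci _] _]; rewrite F0 ?ci ?orbT.
rewrite [RHS](@big_cat_nat _ _ _ b a e) //=; last exact: leq_trans ce.
by rewrite (@big_cat_nat _ _ _ c b e) //= left0 right0 add0r addr0.
Qed.

Definition winsum (R : realFieldType) (n : nat) (v : 'I_n -> R) (l j : nat) : R :=
  \sum_(t < j) padded v (l + t)%N.

Lemma segsum_winsum (R : realFieldType) n (v : 'I_n -> R) l j :
  (0 < j)%N -> (l + j <= n)%N -> segsum v l (l + j - 1) = winsum v l j.
Proof.
move=> j0 ljn; rewrite /segsum /winsum -sum_nat_shift.
rewrite (eq_bigr (fun i : 'I_n => padded v i)); last by move=> i _; rewrite padded_ord.
rewrite -(big_mkord (fun i => (l <= i) && (i <= l + j - 1))%N) big_mkcond /=.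
rewrite -(@sum_nat_support _ _ 0 l (l + j) n) ?leq_addr //; last first.
  by move=> i /orP[] lt; rewrite ifF //; apply/negbTE; lia.
by apply: eq_big_nat => i lim; rewrite ifT //; lia.
Qed.

Lemma window_objE (R : realFieldType) n (x : R) (v : 'I_n -> R) j :
  (1 <= j)%N -> (j <= n)%N ->
  window_obj x v j = \sum_(l < n.+1 - j) pospart (x - winsum v l j).
Proof.
move=> j1 jn; rewrite /window_obj (big_ord_widen n (fun l => pospart (x - winsum v l j))); last by lia.
apply: eq_big => [l|l ljn]; first by apply/idP/idP; lia.
by rewrite segsum_winsum.
Qed.

Lemma sum_winsum (R : realFieldType) n (v : 'I_n -> R) j :
  \sum_(l < n.+1 - j) winsum v l j =
  \sum_(t < j) \sum_(t <= i < t + (n.+1 - j)) padded v i.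
Proof.
rewrite exchange_big; apply: eq_bigr => t _; rewrite sum_nat_shift.
by apply: eq_bigr => l _; rewrite addnC.
Qed.

Lemma pospart_ge (R : realFieldType) (a : R) : a <= pospart a.
Proof. by rewrite /pospart le_max lexx. Qed.

Lemma pospart_ge0 (R : realFieldType) (a : R) : 0 <= pospart a.
Proof. by rewrite /pospart le_max lexx orbT. Qed.

(* The universal lower bound on a window objective: each coordinate lies in
   at most j windows of length j. *)
Lemma window_obj_lb (R : realFieldType) n (x w : R) (v : 'I_n -> R) j :
  Lambda w v -> (1 <= j)%N -> (j <= n)%N ->
  (n.+1 - j)%:R * x - j%:R * w <= window_obj x v j.
Proof.
move=> [v0 vw] j1 jn; rewrite window_objE //.
apply: le_trans (ler_sum _ (fun l _ => pospart_ge _)).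
rewrite sumrB sumr_const card_ord -[x *+ _]mulr_natl lerD2l lerN2 sum_winsum.
rewrite -[j in j%:R]card_ord -sumr_const mulr_suml; apply: ler_sum => t _.
rewrite mul1r -vw sum_padded; apply: sum_nat_subinterval; rewrite ?leq0n ?leq_addr //.
  exact: padded_ge0.
by have := ltn_ord t; lia.
Qed.

Lemma window_obj_ge0 (R : realFieldType) n (x : R) (v : 'I_n -> R) j :
  0 <= window_obj x v j.
Proof. by apply: sumr_ge0 => l _; apply: pospart_ge0. Qed.

Lemma fobj_windows (R : realFieldType) n (x : R) (v : 'I_n -> R) :
  fobj x v = \sum_(j < n) window_obj x v j.+1.
Proof.
set g := fun l k : nat => pospart (x - segsum v l k).
have W (j : 'I_n) : window_obj x v j.+1 =
    \sum_(l < n) (if (l + j < n)%N then g l (l + j)%N else 0).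
  by rewrite /window_obj big_mkcond; apply: eq_bigr => l _; rewrite addnS subn1.
rewrite (eq_bigr _ (fun j _ => W j)) exchange_big /fobj; apply: eq_bigr => l _.
rewrite -big_mkcond -(big_mkord (fun j => (l + j < n)%N) (fun j => g l (l + j)%N)).
rewrite -(big_geq_mkord l n xpredT (g l)) -{1}[l : nat]add0n big_addn.
rewrite (big_nat_widen _ _ n) ?leq_subr //.
apply: congr_big_nat => // [j|j _]; first by rewrite ltn_subRL addnC.
by rewrite addnC.
Qed.

(* The combinatorics of the block boundaries of v*: consecutive blocks of
   lengths d 0, ..., d m, each at least D, starting at 1; when they tile
   {1, ..., n + 1}, the inner boundaries are the marked indices. *)
Section BlockBoundaries.
Variables (n m D : nat) (d : 'I_m.+1 -> nat).
Hypothesis d_ge : forall k, (D <= d k)%N.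

Definition cut (t : nat) : nat := \sum_(k < m.+1 | (k < t)%N) d k.

Lemma cut0 : cut 0 = 0%N.
Proof. by rewrite /cut big_pred0. Qed.

Lemma cutS t (ht : (t < m.+1)%N) : cut t.+1 = (cut t + d (Ordinal ht))%N.
Proof.
rewrite /cut (bigD1 (Ordinal ht)) //= addnC; congr (_ + _)%N.
by apply: eq_bigl => k; rewrite ltnS leq_eqVlt -val_eqE /=; case: ltngtP.
Qed.

Lemma cut_gap a b : (a <= b)%N -> (b <= m.+1)%N -> (cut a + (b - a) * D <= cut b)%N.
Proof.
move=> ab; elim: b ab => [|b IH] ab bm.
  by move: ab; rewrite leqn0 => /eqP ->; rewrite addn0.
move: ab; rewrite leq_eqVlt => /orP[/eqP<-|ab]; first by rewrite subnn addn0.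
rewrite (cutS bm) subSn //; have := IH ab (ltnW bm); have := d_ge (Ordinal bm); lia.
Qed.

Lemma cut_mono a b : (a <= b)%N -> (b <= m.+1)%N -> (cut a <= cut b)%N.
Proof. by move=> ab bm; apply: leq_trans (cut_gap ab bm); apply: leq_addr. Qed.

Lemma cut_lt a b : (a < b)%N -> (b <= m.+1)%N -> (cut a + D <= cut b)%N.
Proof.
move=> ab bm; have := cut_gap (ltnW ab) bm.
have : (D <= (b - a) * D)%N by apply: leq_pmull; lia.
lia.
Qed.

Definition marked (i : nat) : bool :=
  [exists j : 'I_m.+1, (0 < j)%N && (i.+1 == cut j)].

Lemma markedP i : reflect (exists2 j : 'I_m.+1, (0 < j)%N & i.+1 = cut j) (marked i).
Proof.
apply: (iffP existsP) => [[j /andP[j0 /eqP e]]|[j j0 e]]; first by exists j.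
by exists j; rewrite j0 e eqxx.
Qed.

Lemma marked_sep i1 i2 : marked i1 -> marked i2 -> (i1 < i2)%N -> (i1 + D <= i2)%N.
Proof.
move=> /markedP[j1 _ e1] /markedP[j2 _ e2] lt12; case: (leqP j2 j1) => j12.
- by have := cut_mono j12 (ltnW (ltn_ord j1)); lia.
- by have := cut_lt j12 (ltnW (ltn_ord j2)); lia.
Qed.

Hypothesis D_gt0 : (0 < D)%N.

Lemma cut_inj (j1 j2 : 'I_m.+1) : cut j1 = cut j2 -> j1 = j2.
Proof.
move=> e; apply: val_inj; case: (ltngtP j1 j2) => // lt.
- by have := cut_lt lt (ltnW (ltn_ord j2)); lia.
- by have := cut_lt lt (ltnW (ltn_ord j1)); lia.
Qed.

Hypothesis d_sum : (\sum_k d k)%N = n.+1.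

Lemma cut_full : cut m.+1 = n.+1.
Proof. by rewrite -d_sum; apply: eq_bigl => k; rewrite ltn_ord. Qed.

Lemma cut_range (j : 'I_m.+1) : (0 < j)%N -> (D <= cut j)%N /\ (cut j + D <= n.+1)%N.
Proof.
move=> j0; have := cut_lt j0 (ltnW (ltn_ord j)); have := cut_lt (ltn_ord j) (leqnn _).
by rewrite cut0 cut_full.
Qed.

Lemma marked_range i : marked i -> (D <= i.+1)%N /\ (i.+1 + D <= n.+1)%N.
Proof. by case/markedP=> j j0 ->; apply: cut_range. Qed.

(* Exactly m indices of {0, ..., n - 1} are marked: each marked index is hit
   by exactly one inner boundary (cut_inj), and each inner boundary j marks
   the index (cut j) - 1, which lies in range by cut_range. *)
Lemma marked_count : (\sum_(i < n) marked i)%N = m.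
Proof.
have indicator i : (marked i : nat) = (\sum_(j : 'I_m.+1 | (0 < j)%N) (i.+1 == cut j))%N.
  case: (boolP (marked i)) => [/markedP[j0 j00 e]|nm].
    rewrite (bigD1 j0) //= e eqxx big1 // => j /andP[_ ne].
    by case: eqP => //= e'; case/eqP: ne; apply: cut_inj.
  rewrite big1 // => j j0; case: eqP => //= e.
  by case/negP: nm; apply/markedP; exists j.
under eq_bigr do rewrite indicator.
rewrite exchange_big /= (eq_bigr (fun _ => 1%N)); last first.
  move=> j j0; have [lo hi] := cut_range j0.
  have ji : ((cut j).-1 < n)%N by lia.
  rewrite (bigD1 (Ordinal ji)) //= prednK ?eqxx; last by lia.
  rewrite big1 // => i ne; case: eqP => //= e.
  by case/eqP: ne; apply: val_inj => /=; lia.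
by rewrite big_mkcond big_ord_recl /= add0n sum_nat_const card_ord muln1.
Qed.

End BlockBoundaries.

(* Every window of length D + 1 inside {0, ..., n - 1} contains a marked
   index: the block boundary following the last one at or before l is at most
   D + 1 further, and it is an inner boundary since the final one is n + 1. *)
Lemma marked_cover n m D (d : 'I_m.+1 -> nat) l :
  (\sum_k d k)%N = n.+1 -> (forall k, d k <= D.+1)%N -> (l + D.+1 <= n)%N ->
  exists2 t, (t <= D)%N & marked d (l + t)%N.
Proof.
move=> d_sum d_le ln.
have exP : exists k, (k <= m)%N && (cut d k <= l)%N by exists 0%N; rewrite cut0.
have ub k : (k <= m)%N && (cut d k <= l)%N -> (k <= m)%N by case/andP.
have [k /andP[km kl] kmax] := ex_maxnP exP ub.
have km1 : (k < m.+1)%N by [].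
have ek := cutS d km1; have dk := d_le (Ordinal km1).
case: (ltnP k m) => [km' | mk]; last first.
  have km2 : k = m by lia.
  have : cut d k.+1 = n.+1 by rewrite km2 (cut_full d_sum).
  lia.
have beyond : (l < cut d k.+1)%N.
  by rewrite ltnNge; apply/negP => kl1; have := kmax k.+1; rewrite km' kl1 => /(_ isT); lia.
exists (cut d k.+1 - l.+1)%N; first lia.
by apply/markedP; exists (Ordinal (km' : (k.+1 < m.+1)%N)) => //=; lia.
Qed.

Section OptimalVector.
Variables (R : realFieldType) (n m D : nat) (x : R) (d : 'I_m.+1 -> nat).
Hypothesis d_ge : forall k, (D <= d k)%N.
Hypothesis d_sum : (\sum_k d k)%N = n.+1.
Hypothesis D_gt0 : (0 < D)%N.
Hypothesis x_gt0 : 0 < x.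

Local Notation vs := (@vstar R n m x d).

Lemma vstarE (i : 'I_n) : vs i = if marked d i then x else 0.
Proof. by []. Qed.

Lemma padded_vstar i : padded vs i = if marked d i then x else 0.
Proof.
rewrite /padded; case: insubP => [k _ <-|] //=.
rewrite -leqNgt => ni; case: ifP => // /(marked_range d_ge d_sum) [_ hi].
by exfalso; lia.
Qed.

(* A window of length at most D contains at most one marked index. *)
Lemma winsum_vstar_le l j : (j <= D)%N -> winsum vs l j <= x.
Proof.
move=> jD; rewrite /winsum.
have [t0 mt0|none] := pickP (fun t : 'I_j => marked d (l + t)%N); last first.
  by rewrite big1 ?ltW // => t _; rewrite padded_vstar none.
rewrite (bigD1 t0) //= big1 ?addr0; first by rewrite padded_vstar mt0.
move=> t ne; rewrite padded_vstar; case: ifP => // mt; exfalso.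
have := ltn_ord t; have := ltn_ord t0; case: (ltngtP t t0) => lt.
- by have := marked_sep d_ge mt mt0; lia.
- by have := marked_sep d_ge mt0 mt; lia.
- by move=> _ _; case/eqP: ne; apply: val_inj.
Qed.

Lemma vstar_Lambda : Lambda (m%:R * x) vs.
Proof.
split=> [i|]; first by rewrite vstarE; case: ifP => // _; apply: ltW.
rewrite (eq_bigr (fun i : 'I_n => (marked d i)%:R * x)); last first.
  by move=> i _; rewrite vstarE; case: ifP; rewrite ?mul1r ?mul0r.
by rewrite -mulr_suml -natr_sum (marked_count d_ge D_gt0 d_sum).
Qed.

(* For j <= D, each of the j shifted ranges summed in sum_winsum contains
   all marked indices, hence carries the whole mass m x. *)
Lemma vstar_shifted_range t j : (t < j)%N -> (j <= D)%N -> (j <= n)%N ->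
  \sum_(t <= i < t + (n.+1 - j)) padded vs i = m%:R * x.
Proof.
move=> tj jD jn; case: vstar_Lambda => _ <-; rewrite sum_padded.
apply: sum_nat_support; rewrite ?leq0n ?leq_addr //; last lia.
move=> i out; rewrite padded_vstar; case: ifP => // /(marked_range d_ge d_sum).
by lia.
Qed.

Lemma window_vstar_short j : (1 <= j)%N -> (j <= n)%N -> (j <= D)%N ->
  window_obj x vs j = (n.+1 - j)%:R * x - j%:R * (m%:R * x).
Proof.
move=> j1 jn jD; rewrite window_objE //.
rewrite (eq_bigr (fun l : 'I_(n.+1 - j) => x - winsum vs l j)); last first.
  by move=> l _; rewrite /pospart max_l // subr_ge0 winsum_vstar_le.
rewrite sumrB sumr_const card_ord -[x *+ _]mulr_natl sum_winsum; congr (_ - _).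
rewrite -[j in RHS]card_ord -sumr_const mulr_suml; apply: eq_bigr => t _.
by rewrite mul1r vstar_shifted_range.
Qed.

Hypothesis d_le : forall k, (d k <= D.+1)%N.

(* Long windows: each contains a marked index, so W_j(vstar) vanishes. *)
Lemma window_vstar_long j : (j <= n)%N -> (D < j)%N -> window_obj x vs j = 0.
Proof.
move=> jn Dj; rewrite window_objE //; last lia.
apply: big1 => l _.
have [t tD mt] : exists2 t, (t <= D)%N & marked d (l + t)%N.
  by apply: (marked_cover d_sum d_le); have := ltn_ord l; lia.
have tj : (t < j)%N by lia.
rewrite /pospart max_r // subr_le0 /winsum (bigD1 (Ordinal tj)) //=.
rewrite padded_vstar mt lerDl; apply: sumr_ge0 => i _.
by apply: padded_ge0; case: vstar_Lambda.
Qed.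

Lemma fobj_vstar : (D <= n)%N ->
  fobj x vs = \sum_(j < D) ((n.+1 - j.+1)%:R * x - (j.+1)%:R * (m%:R * x)).
Proof.
move=> Dn; rewrite fobj_windows (bigID (fun j : 'I_n => (j < D)%N)) /=.
rewrite [X in _ + X]big1 ?addr0; last first.
  by move=> j; rewrite -leqNgt => Dj; apply: window_vstar_long.
rewrite -(big_ord_widen _ (fun j => window_obj x vs j.+1) Dn).
by apply: eq_bigr => j _; rewrite window_vstar_short //; have := ltn_ord j; lia.
Qed.

End OptimalVector.

Lemma sum_short_windows (R : realFieldType) (n m D : nat) (x : R) : (D <= n)%N ->
  \sum_(j < D) ((n.+1 - j.+1)%:R * x - (j.+1)%:R * (m%:R * x)) =
  D%:R * (n.+1)%:R * x - 2^-1 * (m.+1)%:R * x * D%:R * (D.+1)%:R.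
Proof.
elim: D => [|D IH] Dn; first by rewrite big_ord0 !mulr0 !mul0r subrr.
rewrite big_ord_recr /= IH; last exact: ltnW.
rewrite subSS natrB; last exact: ltnW.
by rewrite -!natr1; field.
Qed.

Theorem mainTheorem3 (R : realFieldType) (n m : nat) (x : R) (d : 'I_m.+1 -> nat) :
  (1 <= n)%N -> (1 <= m)%N -> (m <= n)%N -> 0 < x ->
  (forall k, d k = ((n.+1) %/ (m.+1))%N \/ d k = ((n.+1) %/ (m.+1)).+1) ->
  (\sum_(k < m.+1) d k)%N = n.+1 ->
  let Delta := ((n.+1) %/ (m.+1))%N in
  let vs := @vstar R n m x d in
  [/\ Lambda (m%:R * x) vs,
      (forall v : 'I_n -> R, Lambda (m%:R * x) v -> fobj x vs <= fobj x v),
      fobj x vs = Delta%:R * (n.+1)%:R * x - 2^-1 * (m.+1)%:R * x * Delta%:R * (Delta.+1)%:R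
    & forall v : 'I_n -> R, Lambda (m%:R * x) v ->
        forall j : nat, (1 <= j)%N -> (j <= n)%N -> window_obj x v j >= window_obj x vs j].
Proof.
move=> n1 m1 mn x0 hd d_sum Delta vs.
have D_gt0 : (0 < Delta)%N by rewrite divn_gt0.
have Dn : (Delta <= n)%N by have := leq_divM n.+1 m.+1; nia.
have d_ge k : (Delta <= d k)%N by case: (hd k) => ->.
have d_le k : (d k <= Delta.+1)%N by case: (hd k) => ->.
have windows (v : 'I_n -> R) : Lambda (m%:R * x) v ->
    forall j, (1 <= j)%N -> (j <= n)%N -> window_obj x vs j <= window_obj x v j.
  move=> Lv j j1 jn; case: (leqP j Delta) => jD.
    by rewrite (window_vstar_short d_ge) //; apply: window_obj_lb.
  by rewrite (window_vstar_long d_ge) //; apply: window_obj_ge0.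
split=> //; first exact: vstar_Lambda d_ge d_sum D_gt0 x0.
  by move=> v Lv; rewrite !fobj_windows; apply: ler_sum => j _; apply: windows.
by rewrite (fobj_vstar d_ge) // sum_short_windows.
Qed.
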